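(* In the setting below, the function $F=F(\theta,m,\bar a)$ on $\check T\otimes\mathbb{C}$, $$F(x)=\exp\!\Big(\tfrac{k}{n}\hat I(\bar m)(x)+\tfrac{k}{n}\phi(\bar m)\,\bar a\Big)\,\theta(x+\bar m\otimes\bar a),$$ does not depend on the choice of the extension $\bar m\in\check T$ of $m:\mathbb{T}[n]\to T$.
   Context: $\mathbb{T}$ is the circle group, $\mathbb{T}[n]$ its subgroup of order $n\ge1$. $G$ is a compact connected Lie group with maximal torus $T$, Weyl group $W$, $\check T=\mathrm{Hom}(\mathbb{T},T)$, $\hat T=\mathrm{Hom}(T,\mathbb{T})$; characters are extended $\mathbb{C}$-linearly to $\check T\otimes\mathbb{C}$ and $\mathbb{Z}[\hat T]$ is viewed as functions of $x\in\check T\otimes\mathbb{C}$ via $\chi\mapsto e^{\chi(x)}$. Let $\xi\in H^4(BG;\mathbb{Z})$ be positive definite, with quadratic form $\phi:\check T\to\mathbb{Z}$ ($\phi(m)$ = coefficient of $z^2$ in $(Bm)^*\xi$, $z\in H^2(B\mathbb{T};\mathbb{Z})$ the generator), $I(a,b)=\phi(a+b)-\phi(a)-\phi(b)$, $\hat I(a)(b)=I(a,b)$. Fix $\tau$ with $\mathrm{Im}\,\tau>0$, $q=e^{2\pi i\tau}$, $C=\mathbb{C}/(2\pi i\mathbb{Z}+2\pi i\tau\mathbb{Z})$. A theta function of level $\xi$ is $\theta\in\mathbb{Z}[\hat T]((q))$, holomorphic in $(x,\tau)$, with $\theta(x+2\pi i\tau m)=e^{-\hat I(m)(x)}q^{-\phi(m)}\theta(x)$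 for $m\in\check T$ and $\theta(wx)=\theta(x)$ for $w\in W$. Let $m:\mathbb{T}[n]\to T$ be a homomorphism, $a\in C$ with $na=0$, $\bar a\in\mathbb{C}$ a lift of $a$, and $\ell,k\in\mathbb{Z}$ the integers with $n\bar a=2\pi i\ell+2\pi i\tau k$. An extension $\bar m\in\check T$ of $m$ is a cocharacter with $\bar m|_{\mathbb{T}[n]}=m$. *)

From mathcomp Require Import all_boot all_algebra.
From mathcomp Require Import complex.
From mathcomp Require Import all_classical all_reals all_analysis.
Set Implicit Arguments. Unset Strict Implicit. Unset Printing Implicit Defensive.
Import GRing.Theory Num.Theory ComplexField.
Import numFieldNormedType.Exports.
Local Open Scope ring_scope.
Local Open Scope classical_set_scope.
Local Open Scope complex_scope.

(* Coordinates: T = (S^1)^r, so  Tcheck = Hom(S^1,T) = Z^r (row vectors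
   'rV[int]_r, a cocharacter m acting by z |-> (z^(m_i))_i),
   That = Hom(T,S^1) = Z^r with the standard pairing, and
   Tcheck (x) C = C^r ('rV[C]_r). *)

Section Defs.
Context (R : realType).
Local Notation C := R[i].

Definition cexp (z : C) : C :=
  (expR (complex.Re z))%:C * ((cos (complex.Im z))%:C + 'i * (sin (complex.Im z))%:C).

Definition two_pi_i : C := (2 * pi)%:C * 'i.

Definition eval_char (r : nat) (chi : 'rV[int]_r) (x : 'rV[C]_r) : C :=
  \sum_(i < r) (chi 0 i)%:~R * x 0 i.

Definition tensor (r : nat) (m : 'rV[int]_r) (a : C) : 'rV[C]_r :=
  \row_(i < r) ((m 0 i)%:~R * a).

Definition polI (r : nat) (phi : 'rV[int]_r -> int) (a b : 'rV[int]_r) : int :=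
  phi (a + b) - phi a - phi b.

Definition Ihat (r : nat) (phi : 'rV[int]_r -> int) (m : 'rV[int]_r)
    (x : 'rV[C]_r) : C :=
  \sum_(i < r) (polI phi m (delta_mx 0 i))%:~R * x 0 i.

Definition pos_def_quadratic_form (r : nat) (phi : 'rV[int]_r -> int) : Prop :=
  [/\ (forall (k : int) (m : 'rV[int]_r), phi (k *: m) = k ^+ 2 * phi m),
      (forall a b c : 'rV[int]_r, polI phi (a + b) c = polI phi a c + polI phi b c)
    & (forall m : 'rV[int]_r, m != 0 -> 0 < phi m)].

(* Elements of Z[That]((q)): a starting exponent j0 and, for each n : nat,
   the coefficient of q^(j0+n), an element of Z[That] given as a finite
   formal sum  sum_{(chi,c) in list} c * e^chi. *)
Record char_laurent (r : nat) := CharLaurent {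
  cl_val : int ;
  cl_coef : nat -> seq ('rV[int]_r * int) }.

Definition qpow (tau : C) (j : int) : C := cexp (two_pi_i * tau * j%:~R).

Definition cl_partial (r : nat) (L : char_laurent r) (tau : C) (x : 'rV[C]_r)
    (N : nat) : C :=
  \sum_(n < N) qpow tau (cl_val L + n%:Z) *
     \sum_(p <- cl_coef L n) (p.2)%:~R * cexp (eval_char p.1 x).

Definition ccvg (u : nat -> C) (v : C) : Prop :=
  ((fun N => complex.Re (u N)) @ \oo --> complex.Re v) /\
  ((fun N => complex.Im (u N)) @ \oo --> complex.Im v).

(* th : (tau, x) |-> th tau x is a theta function of level phi (with Weyl
   group acting on Tcheck through the integer matrices in W), given by the
   q-expansion L. *)
Definition is_theta_function (r : nat) (W : seq 'M[int]_r)
    (phi : 'rV[int]_r -> int) (L : char_laurent r)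
    (th : C -> 'rV[C]_r -> C) : Prop :=
  [/\ (forall tau x, 0 < complex.Im tau -> ccvg (cl_partial L tau x) (th tau x)),
      (forall tau x (m : 'rV[int]_r), 0 < complex.Im tau ->
         th tau (x + tensor m (two_pi_i * tau)) =
         cexp (- Ihat phi m x) * qpow tau (- phi m) * th tau x)
    & (forall tau x w, 0 < complex.Im tau -> w \in W ->
         th tau (x *m map_mx intr w) = th tau x)].

Definition weyl_action_ok (r : nat) (W : seq 'M[int]_r)
    (phi : 'rV[int]_r -> int) : Prop :=
  forall w, w \in W -> w \in unitmx /\ forall m, phi (m *m w) = phi m.

Definition in_Tn (n : nat) (z : C) : bool := z ^+ n == 1.

Definition is_hom_Tn (r n : nat) (m : C -> 'rV[C]_r) : Prop :=
  (forall z, in_Tn n z -> forall i, `|m z 0 i| = 1) /\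
  (forall z w, in_Tn n z -> in_Tn n w ->
     m (z * w) = \row_(i < r) (m z 0 i * m w 0 i)).

Definition is_extension (r n : nat) (m : C -> 'rV[C]_r) (mb : 'rV[int]_r) : Prop :=
  forall z, in_Tn n z -> forall i, m z 0 i = z ^ (mb 0 i).

Definition Ffun (r : nat) (phi : 'rV[int]_r -> int) (th : C -> 'rV[C]_r -> C)
    (tau : C) (n : nat) (k : int) (mb : 'rV[int]_r) (abar : C)
    (x : 'rV[C]_r) : C :=
  cexp ((k%:~R / n%:R) * Ihat phi mb x + (k%:~R / n%:R) * (phi mb)%:~R * abar)
  * th tau (x + tensor mb abar).

End Defs.
Arguments two_pi_i {R}.

(* Two extensions of [m : T[n] -> T] agree on a primitive [n]-th root of unity, so they
   differ by [n d] for a cocharacter [d].  Replacing [mb] by [mb + n d] shifts the argument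
   of theta by [d (x) n abar = d (x) 2 pi i l + k d (x) 2 pi i tau]: the first summand is a
   period of theta (its q-expansion is a series of characters), the second multiplies
   theta by the automorphy factor, and the prefactor [exp (k/n (...))] of [F] changes by
   exactly the inverse of that factor, up to [exp (2 pi i k l phi d) = 1]. *)
From mathcomp Require Import all_boot all_algebra.
From mathcomp Require Import cyclic separable cyclotomic.
From mathcomp Require Import complex ring zify.
From mathcomp Require Import all_classical all_reals all_analysis.
Set Implicit Arguments. Unset Strict Implicit. Unset Printing Implicit Defensive.
Import GRing.Theory Num.Theory ComplexField.
Local Open Scope ring_scope.
Local Open Scope complex_scope.

Section PolarForm.
Variables (r : nat) (phi : 'rV[int]_r -> int).
Hypothesis polIDl :
  forall a b c : 'rV[int]_r, polI phi (a + b) c = polI phi a c + polI phi b c.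

Lemma polIC a b : polI phi a b = polI phi b a.
Proof. by rewrite /polI [b + a]addrC; ring. Qed.

Lemma polI0l c : polI phi 0 c = 0.
Proof. by have := polIDl 0 0 c; rewrite addr0; lia. Qed.

Lemma polINl a c : polI phi (- a) c = - polI phi a c.
Proof. by have := polIDl a (- a) c; rewrite subrr polI0l; lia. Qed.

Lemma polIZl (k : int) a c : polI phi (k *: a) c = k * polI phi a c.
Proof.
have polIMnl (n : nat) : polI phi (a *~ n) c = n%:Z * polI phi a c.
  elim: n => [|n IHn]; first by rewrite mulr0z polI0l mul0r.
  by rewrite intS mulrzDr mulr1z polIDl IHn; ring.
have -> : k *: a = a *~ k by rewrite -scaler_int intz.
case: k => n; first exact: polIMnl.
by rewrite NegzE mulrNz polINl polIMnl; ring.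
Qed.

Lemma polIDr a b c : polI phi c (a + b) = polI phi c a + polI phi c b.
Proof. by rewrite !(polIC c) polIDl. Qed.

Lemma polIZr (k : int) a c : polI phi c (k *: a) = k * polI phi c a.
Proof. by rewrite !(polIC c) polIZl. Qed.

Lemma polI_sum_delta d v :
  polI phi d v = \sum_(i < r) v 0 i * polI phi d (delta_mx 0 i).
Proof.
rewrite {1}(row_sum_delta v).
rewrite (big_morph (polI phi d) (fun a b => polIDr a b d) (id1 := 0)); last first.
  by rewrite polIC polI0l.
by apply: eq_bigr => i _; rewrite polIZr.
Qed.

End PolarForm.

Section ComplexExponential.
Variable R : realType.
Local Notation C := R[i].

Lemma cexpE (z : C) :
  cexp z = (expR (complex.Re z) * cos (complex.Im z))
             +i* (expR (complex.Re z) * sin (complex.Im z)).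
Proof.
case: z => a b; apply/eqP; rewrite eq_complex /=.
by apply/andP; split; apply/eqP; ring.
Qed.

Lemma cexpD (a b : C) : cexp (a + b) = cexp a * cexp b.
Proof.
rewrite !cexpE; case: a => a1 a2; case: b => b1 b2 /=.
rewrite expRD cosD sinD; apply/eqP; rewrite eq_complex /=.
by apply/andP; split; apply/eqP; ring.
Qed.

Lemma cexp0 : cexp 0 = 1 :> C.
Proof.
rewrite cexpE /= expR0 cos0 sin0; apply/eqP; rewrite eq_complex /=.
by apply/andP; split; apply/eqP; ring.
Qed.

Lemma cexp_two_pi_i : cexp two_pi_i = 1 :> C.
Proof.
rewrite cexpE /two_pi_i /= !mulr0 !mul0r !mulr1 !subr0 !addr0 expR0 !mul1r.
by rewrite mulr_natl cos2pi sin2pi.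
Qed.

Lemma cexp_two_pi_i_int (j : int) : cexp (two_pi_i * j%:~R) = 1 :> C.
Proof.
have cexp_nat (n : nat) : cexp (two_pi_i * n%:R) = 1 :> C.
  elim: n => [|n IHn]; first by rewrite mulr0 cexp0.
  by rewrite mulrS mulrDr mulr1 cexpD cexp_two_pi_i IHn mul1r.
case: j => n; first exact: cexp_nat.
have := cexpD (- (two_pi_i * (n.+1)%:R)) (two_pi_i * (n.+1)%:R).
by rewrite addNr cexp0 cexp_nat mulr1 NegzE intrN mulrN => <-.
Qed.

Lemma cexpD_two_pi_i_int z (j : int) : cexp (z + two_pi_i * j%:~R) = cexp z :> C.
Proof. by rewrite cexpD cexp_two_pi_i_int mulr1. Qed.

Lemma ccvg_unique (u : nat -> C) v1 v2 : ccvg u v1 -> ccvg u v2 -> v1 = v2.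
Proof.
case=> Re1 Im1 [Re2 Im2]; apply/eqP; rewrite eq_complex.
by rewrite (cvg_unique (@Rhausdorff R) Re1 Re2) (cvg_unique (@Rhausdorff R) Im1 Im2) !eqxx.
Qed.

End ComplexExponential.

Lemma closed_prim_root_exists (F : closedFieldType) (n : nat) :
  (n > 0)%N -> n%:R != 0 :> F -> {z : F | n.-primitive_root z}.
Proof.
move=> n_gt0 n_neq0; apply/sigW.
have [rs Dp] := closed_field_poly_normal ('X^n - 1 : {poly F}).
rewrite (monicP _) ?monicXnsubC // scale1r in Dp.
have rs_unity : all n.-unity_root rs.
  by apply/allP => z; rewrite -root_prod_XsubC -Dp.
have size_rs : (n < (size rs).+1)%N.
  by rewrite -(size_prod_XsubC rs id) -Dp size_XnsubC.
have [|z] := hasP (has_prim_root n_gt0 rs_unity _ size_rs); last by exists z.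
by rewrite -separable_prod_XsubC -Dp separable_Xn_sub_1.
Qed.

Lemma prim_root_exprz_eq1 (F : fieldType) (n : nat) (z : F) (e : int) :
  n.-primitive_root z -> z ^ e = 1 -> (n%:Z %| e)%Z.
Proof.
move=> z_prim; rewrite dvdzE; case: e => j /= /eqP.
  by rewrite -(prim_order_dvd z_prim).
by rewrite invr_eq1 -(prim_order_dvd z_prim).
Qed.

Lemma extensions_differ_by_multiple (R : realType) (r n : nat)
    (m : R[i] -> 'rV[R[i]]_r) (mb1 mb2 : 'rV[int]_r) :
  (n > 0)%N -> is_extension n m mb1 -> is_extension n m mb2 ->
  exists d : 'rV[int]_r, mb2 = mb1 + n%:Z *: d.
Proof.
move=> n_gt0 ext1 ext2.
have n_neq0 : n%:R != 0 :> R[i] by rewrite pnatr_eq0 -lt0n.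
have [z z_prim] := closed_prim_root_exists n_gt0 n_neq0.
have n_dvd (i : 'I_r) : (n%:Z %| (mb2 0 i - mb1 0 i)%R)%Z.
  have z_Tn : in_Tn n z by rewrite /in_Tn prim_expr_order.
  have z_neq0 : z != 0 by rewrite (prim_root_eq0 z_prim) -lt0n.
  apply: (prim_root_exprz_eq1 z_prim).
  by rewrite expfzDr // -ext2 // ext1 // -expfzDr // subrr.
exists (\row_i ((mb2 0 i - mb1 0 i)%R %/ n%:Z)%Z); apply/rowP => i.
by rewrite !mxE mulrC divzK // addrC subrK.
Qed.

Section TensorAndPeriods.
Variables (R : realType) (r : nat).
Local Notation C := R[i].

Lemma tensorDl (u v : 'rV[int]_r) (a : C) : tensor (u + v) a = tensor u a + tensor v a.
Proof. by apply/rowP => i; rewrite !mxE intrD mulrDl. Qed.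

Lemma tensorDr (u : 'rV[int]_r) (a b : C) : tensor u (a + b) = tensor u a + tensor u b.
Proof. by apply/rowP => i; rewrite !mxE mulrDr. Qed.

Lemma tensorZl (k : int) (u : 'rV[int]_r) (a : C) :
  tensor (k *: u) a = tensor u (k%:~R * a).
Proof. by apply/rowP => i; rewrite !mxE intrM mulrA [_ * k%:~R]mulrC. Qed.

Lemma cexp_eval_char_period chi (x : 'rV[C]_r) d (l : int) :
  cexp (eval_char chi (x + tensor d (two_pi_i * l%:~R))) = cexp (eval_char chi x).
Proof.
have -> : eval_char chi (x + tensor d (two_pi_i * l%:~R)) =
          eval_char chi x + two_pi_i * (\sum_(i < r) chi 0 i * d 0 i * l)%:~R.
  rewrite /eval_char rmorph_sum mulr_sumr -big_split; apply: eq_bigr => i _.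
  by rewrite !mxE !rmorphM /=; ring.
exact: cexpD_two_pi_i_int.
Qed.

Lemma theta_period W phi L th tau (x : 'rV[C]_r) d (l : int) :
  is_theta_function W phi L th -> 0 < complex.Im tau ->
  th tau (x + tensor d (two_pi_i * l%:~R)) = th tau x.
Proof.
case=> th_series _ _ Im_tau.
have same_partials : cl_partial L tau (x + tensor d (two_pi_i * l%:~R)) =
                     cl_partial L tau x.
  apply: funext => N; apply: eq_bigr => j _; congr (_ * _).
  by apply: eq_bigr => p _; rewrite cexp_eval_char_period.
apply: (@ccvg_unique _ (cl_partial L tau x)); last exact: th_series.
by rewrite -same_partials; apply: th_series.
Qed.

End TensorAndPeriods.

Section ChangeOfExtension.
Variables (R : realType) (r : nat) (phi : 'rV[int]_r -> int).
Local Notation C := R[i].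
Hypothesis phiZ : forall (k : int) (m : 'rV[int]_r), phi (k *: m) = k ^+ 2 * phi m.
Hypothesis polIDl :
  forall a b c : 'rV[int]_r, polI phi (a + b) c = polI phi a c + polI phi b c.

Lemma IhatDl m1 m2 (x : 'rV[C]_r) : Ihat phi (m1 + m2) x = Ihat phi m1 x + Ihat phi m2 x.
Proof. by rewrite /Ihat -big_split; apply: eq_bigr => i _; rewrite polIDl intrD mulrDl. Qed.

Lemma IhatZl (k : int) m (x : 'rV[C]_r) : Ihat phi (k *: m) x = k%:~R * Ihat phi m x.
Proof.
by rewrite /Ihat mulr_sumr; apply: eq_bigr => i _; rewrite polIZl // intrM mulrA.
Qed.

Lemma IhatDr m (x y : 'rV[C]_r) : Ihat phi m (x + y) = Ihat phi m x + Ihat phi m y.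
Proof. by rewrite /Ihat -big_split; apply: eq_bigr => i _; rewrite mxE mulrDr. Qed.

Lemma Ihat_tensor d v (a : C) : Ihat phi d (tensor v a) = (polI phi d v)%:~R * a.
Proof.
rewrite /Ihat polI_sum_delta // rmorph_sum mulr_suml; apply: eq_bigr => i _.
by rewrite mxE rmorphM /=; ring.
Qed.

Lemma Ffun_shift_extension W L th tau (n : nat) (k l : int) (abar : C) :
  is_theta_function W phi L th -> 0 < complex.Im tau -> (0 < n)%N ->
  n%:R * abar = two_pi_i * l%:~R + two_pi_i * tau * k%:~R ->
  forall mb d x, Ffun phi th tau n k (mb + n%:Z *: d) abar x = Ffun phi th tau n k mb abar x.
Proof.
move=> theta Im_tau n_gt0 n_abar mb d x.
have [_ th_quasi _] := theta.
rewrite /Ffun; set y := x + tensor mb abar.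
have -> : x + tensor (mb + n%:Z *: d) abar =
          y + tensor (k *: d) (two_pi_i * tau) + tensor d (two_pi_i * l%:~R).
  rewrite tensorDl tensorZl [_%:~R * abar]n_abar tensorDr tensorZl.
  by rewrite [k%:~R * _]mulrC addrA [_ + tensor d _]addrC addrA.
rewrite (theta_period _ _ _ theta Im_tau) th_quasi // mulrA; congr (_ * _).
rewrite /qpow -!cexpD -[RHS](cexpD_two_pi_i_int _ (k * l * phi d)); congr cexp.
have phiD a b : phi (a + b) = phi a + phi b + polI phi a b by rewrite /polI; ring.
rewrite IhatDl IhatZl phiD phiZ polIZr // phiZ IhatZl IhatDr Ihat_tensor.
rewrite (polIC _ d mb) !(rmorphD, rmorphM, rmorphN, rmorphXn) /=.
have n_neq0 : n%:R != 0 :> C by rewrite pnatr_eq0 -lt0n.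
have -> : abar = (two_pi_i * l%:~R + two_pi_i * tau * k%:~R) / n%:R.
  by rewrite -n_abar mulrAC divff // mul1r.
by field.
Qed.

End ChangeOfExtension.

Theorem lemma5p2 (R : realType) (r : nat) (W : seq 'M[int]_r)
    (phi : 'rV[int]_r -> int) (L : char_laurent r) (th : R[i] -> 'rV[R[i]]_r -> R[i])
    (tau : R[i]) (n : nat) (m : R[i] -> 'rV[R[i]]_r) (abar : R[i]) (l k : int) :
  pos_def_quadratic_form phi ->
  weyl_action_ok W phi ->
  is_theta_function W phi L th ->
  0 < complex.Im tau ->
  (0 < n)%N ->
  is_hom_Tn n m ->
  n%:R * abar = two_pi_i * l%:~R + two_pi_i * tau * k%:~R ->
  forall mb1 mb2 : 'rV[int]_r,
    is_extension n m mb1 -> is_extension n m mb2 ->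
    forall x : 'rV[R[i]]_r,
      Ffun phi th tau n k mb1 abar x = Ffun phi th tau n k mb2 abar x.
Proof.
move=> [phiZ polIDl _] _ theta Im_tau n_gt0 _ n_abar mb1 mb2 ext1 ext2 x.
have [d ->] := extensions_differ_by_multiple n_gt0 ext1 ext2.
by rewrite (Ffun_shift_extension phiZ polIDl theta Im_tau n_gt0 n_abar).
Qed.
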